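(* Let $\mathcal{C}$ be a flag code of type $(t_1,\ldots,t_r)$ on $\mathbb{F}_q^n$. Then $\mathcal{C}$ is an optimum distance flag code if and only if $\mathcal{C}$ is disjoint and, for every $i\in\{1,\ldots,r\}$, the projected code $\mathcal{C}_i$ satisfies $d_S(\mathcal{C}_i)=\min\{2t_i,2(n-t_i)\}$.
   Context: $q$ is a prime power, $n>1$. For subspaces $\mathcal{U},\mathcal{V}$ of $\mathbb{F}_q^n$, $d_S(\mathcal{U},\mathcal{V})=\dim(\mathcal{U}+\mathcal{V})-\dim(\mathcal{U}\cap\mathcal{V})$; for a set $\mathcal{D}$ of subspaces, $d_S(\mathcal{D})$ is the minimum of $d_S$ over pairs of distinct elements (and $0$ if $|\mathcal{D}|=1$). A flag of type $(t_1,\ldots,t_r)$, $0<t_1<\cdots<t_r<n$, is a tuple $(\mathcal{F}_1,\ldots,\mathcal{F}_r)$ of nested subspaces $\mathcal{F}_1\subsetneq\cdots\subsetneq\mathcal{F}_r$ of $\mathbb{F}_q^n$ with $\dim\mathcal{F}_i=t_i$. A flag code of that type is a set of at least two such flags; its distance $d_f(\mathcal{C})$ is the minimum over distinct $\mathcal{F},\mathcal{F}'\in\mathcal{C}$ of $\sum_{i=1}^r d_S(\mathcal{F}_i,\mathcal{F}'_i)$. It is an optimum distance flag code if $d_f(\mathcal{C})= 2\left(\sum_{t_i \leq \lfloor n/2\rfloor} t_i + \sum_{t_i > \lfloor n/2\rfloor} (n-t_i)\right)$. The $i$-projected code is $\mathcal{C}_i=\{\mathcal{F}_i : (\mathcal{F}_1,\ldots,\mathcal{F}_r)\in\mathcal{C}\}$.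 The code $\mathcal{C}$ is disjoint if $|\mathcal{C}_1|=\cdots=|\mathcal{C}_r|=|\mathcal{C}|$. *)

From HB Require Import structures.
From mathcomp Require Import all_boot all_order all_algebra.
Set Implicit Arguments. Unset Strict Implicit. Unset Printing Implicit Defensive.
Import GRing.Theory.
Local Open Scope ring_scope.

Definition subsp (F : finFieldType) (n : nat) := {vspace 'rV[F]_n}.

Definition dS (F : finFieldType) (n : nat) (U V : subsp F n) : nat :=
  (\dim (U + V)%VS - \dim (U :&: V)%VS)%N.

Definition seqmin (s : seq nat) : nat :=
  match s with [::] => 0%N | a :: s' => foldr minn a s' end.

(* minimum of f over ordered pairs of distinct elements of D (0 if none) *)
Definition min_pairs (T : eqType) (D : seq T) (f : T -> T -> nat) : nat :=
  seqmin [seq f x y | x <- D, y <- [seq y <- D | y != x]].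

Definition dS_set (F : finFieldType) (n : nat) (D : seq (subsp F n)) : nat :=
  min_pairs D (@dS F n).

Definition flag (F : finFieldType) (n r : nat) := {ffun 'I_r -> subsp F n}.

Definition is_type (n r : nat) (t : 'I_r -> nat) : Prop :=
  (forall i : 'I_r, (0 < t i < n)%N) /\
  (forall i j : 'I_r, (i < j)%N -> (t i < t j)%N).

Definition is_flag_of_type (F : finFieldType) (n r : nat) (t : 'I_r -> nat)
  (f : flag F n r) : Prop :=
  (forall i : 'I_r, \dim (f i) = t i) /\
  (forall i j : 'I_r, (i < j)%N -> (f i <= f j)%VS /\ f i != f j).

Definition flag_code (F : finFieldType) (n r : nat) (t : 'I_r -> nat)
  (C : seq (flag F n r)) : Prop :=
  uniq C /\ (2 <= size C)%N /\ (forall f, f \in C -> is_flag_of_type t f).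

Definition dflag (F : finFieldType) (n r : nat) (f g : flag F n r) : nat :=
  (\sum_(i < r) dS (f i) (g i))%N.

Definition df_code (F : finFieldType) (n r : nat) (C : seq (flag F n r)) : nat :=
  min_pairs C (@dflag F n r).

Definition optimum_distance (F : finFieldType) (n r : nat) (t : 'I_r -> nat)
  (C : seq (flag F n r)) : Prop :=
  df_code C = (2 * (\sum_(i < r | (t i <= n./2)%N) t i
                   + \sum_(i < r | (n./2 < t i)%N) (n - t i)))%N.

Definition proj_code (F : finFieldType) (n r : nat) (C : seq (flag F n r)) (i : 'I_r)
  : seq (subsp F n) := undup [seq (f : flag F n r) i | f <- C].

Definition disjoint_code (F : finFieldType) (n r : nat) (C : seq (flag F n r)) : Prop :=
  forall i : 'I_r, size (proj_code C i) = size C.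

(** Every component distance satisfies [d_S(F_i, F'_i) <= min(2 t_i, 2 (n - t_i))], and
    the sum of these bounds is exactly the optimum value.  Hence the flag distance
    attains the optimum iff every pair of distinct flags attains every bound.  Since the
    bounds are positive, distinct flags then have distinct components (disjointness),
    and the projected codes attain their bounds as well; conversely disjointness lets
    the bound on [d_S(C_i)] be applied to the components of any two distinct flags. *)

From mathcomp Require Import all_boot all_order all_algebra.
From mathcomp Require Import zify.

Set Implicit Arguments. Unset Strict Implicit.

Lemma seqmin_le (s : seq nat) x : x \in s -> (seqmin s <= x)%N.
Proof.
case: s => [//|a s] /=; elim: s x => [|b s IH] x /=; first by rewrite inE => /eqP ->.
rewrite !inE geq_min => /or3P[/eqP->|/eqP->|xs]; first by rewrite IH ?inE ?eqxx ?orbT.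
  by rewrite leqnn.
by rewrite IH ?inE ?xs ?orbT.
Qed.

Lemma seqmin_mem (s : seq nat) : s != [::] -> seqmin s \in s.
Proof.
case: s => [//|a s] _ /=; elim: s => [|b s IH] /=; first by rewrite inE.
rewrite /minn; case: ifP => _; first by rewrite !inE eqxx orbT.
by move: IH; rewrite !inE => /orP[->|->]; rewrite ?orbT.
Qed.

Section MinPairs.
Variables (T : eqType) (D : seq T) (f : T -> T -> nat).

Lemma mem_pairs x y : x \in D -> y \in D -> y != x ->
  f x y \in [seq f x y | x <- D, y <- [seq y <- D | y != x]].
Proof. by move=> xD yD yx; apply/allpairsPdep; exists x, y; rewrite mem_filter yx. Qed.

Lemma min_pairs_le x y : x \in D -> y \in D -> y != x -> (min_pairs D f <= f x y)%N.
Proof. by move=> xD yD yx; apply/seqmin_le/mem_pairs. Qed.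

Lemma min_pairs_eq m x0 y0 : x0 \in D -> y0 \in D -> y0 != x0 ->
  {in D &, forall x y, y != x -> f x y <= m}%N ->
  min_pairs D f = m <-> {in D &, forall x y, y != x -> f x y = m}.
Proof.
move=> x0D y0D yx0 le_m; split=> [min_m x y xD yD yx | eq_m].
  by apply/eqP; rewrite eqn_leq le_m //= -min_m min_pairs_le.
have /seqmin_mem : [seq f x y | x <- D, y <- [seq y <- D | y != x]] != [::].
  by apply/eqP => nil_pairs; have := mem_pairs x0D y0D yx0; rewrite nil_pairs.
case/allpairsPdep => x [y [xD]]; rewrite mem_filter => /andP[yx yD] min_xy.
by rewrite /min_pairs min_xy eq_m.
Qed.

End MinPairs.

Lemma map_uniq_inj_in (T U : eqType) (h : T -> U) (s : seq T) :
  uniq (map h s) -> {in s &, injective h}.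
Proof.
elim: s => [//|a s IH] /= /andP[ha us] x y; rewrite !inE.
case/orP=> [/eqP->|xs]; case/orP=> [/eqP->|ys] // hxy.
- by move: ha; rewrite hxy map_f.
- by move: ha; rewrite -hxy map_f.
- exact: IH.
Qed.

Lemma size_undup_map (T U : eqType) (h : T -> U) (s : seq T) : uniq s ->
  size (undup (map h s)) = size s <-> {in s &, injective h}.
Proof.
move=> us; split=> [eq_size | inj_h]; last by rewrite undup_id ?size_map ?map_inj_in_uniq.
apply: map_uniq_inj_in; apply/negPn.
by rewrite -ltn_size_undup eq_size size_map ltnn.
Qed.

(* Attaining the bound forces [h] to be injective on [D]: [d] vanishes on the diagonal
   while [m] is positive. *)
Lemma min_pairs_map (T U : eqType) (D : seq T) (h : T -> U) (d : U -> U -> nat) m x0 y0 :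
  x0 \in D -> y0 \in D -> y0 != x0 -> (0 < m)%N -> (forall u, d u u = 0%N) ->
  {in D &, forall x y, d (h x) (h y) <= m}%N ->
  {in D &, forall x y, y != x -> d (h x) (h y) = m} <->
  {in D &, injective h} /\ min_pairs (undup (map h D)) d = m.
Proof.
move=> x0D y0D yx0 m_gt0 d_diag le_m.
have hD x : x \in D -> h x \in undup (map h D) by rewrite mem_undup; apply: map_f.
have le_m' : {in undup (map h D) &, forall u v, v != u -> d u v <= m}%N.
  by move=> _ _ /[!mem_undup] /mapP[x xD ->] /mapP[y yD ->] _; apply: le_m.
split=> [eq_m | [inj_h min_m] x y xD yD yx].
  have inj_h : {in D &, injective h}.
    move=> x y xD yD hxy; apply/eqP; rewrite eq_sym; apply: contraTT m_gt0 => yx.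
    by rewrite -(eq_m x y) // hxy d_diag.
  have hyx0 : h y0 != h x0 by apply: contra yx0 => /eqP/inj_h ->.
  split=> //; apply/(min_pairs_eq (hD _ x0D) (hD _ y0D) hyx0 le_m').
  move=> _ _ /[!mem_undup] /mapP[x xD ->] /mapP[y yD ->] hyx.
  by apply: eq_m => //; apply: contra hyx => /eqP->.
have hyx : h y != h x by apply: contra yx => /eqP/inj_h ->.
by apply/eqP; rewrite eqn_leq le_m //= -min_m min_pairs_le ?hD.
Qed.

Lemma eq_sum_leqP (I : finType) (E1 E2 : I -> nat) : (forall i, E1 i <= E2 i)%N ->
  reflect (forall i, E1 i = E2 i) (\sum_i E1 i == \sum_i E2 i)%N.
Proof.
move=> le_E; rewrite (leqif_sum (fun i _ => leqif_eq (le_E i))).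
apply: (iffP forallP) => eqE i; first exact/eqP/(eqE i).
by rewrite implyTb; apply/eqP.
Qed.

Section Subspaces.
Variables (F : finFieldType) (n : nat).

Lemma dS_le (U V : subsp F n) k : \dim U = k -> \dim V = k ->
  (dS U V <= minn (2 * k) (2 * (n - k)))%N.
Proof.
move=> dimU dimV; rewrite /dS.
have sum_cap := dimv_sum_cap U V.
have le_sum : (\dim (U + V)%VS <= n)%N.
  by have := dimvS (subvf (U + V)%VS); rewrite dimvf /dim /= mul1n.
have le_cap := dimvS (capvSl U V).
lia.
Qed.

Lemma dS_id (U : subsp F n) : dS U U = 0%N.
Proof. by rewrite /dS addvv capvv subnn. Qed.

End Subspaces.

(* For [t <= n], [t <= n./2] is exactly the case [2 t <= 2 (n - t)]. *)
Lemma optimum_value_sum (n r : nat) (t : 'I_r -> nat) : (forall i, t i <= n)%N ->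
  (2 * (\sum_(i < r | (t i <= n./2)%N) t i + \sum_(i < r | (n./2 < t i)%N) (n - t i)))%N
  = (\sum_i minn (2 * t i) (2 * (n - t i)))%N.
Proof.
move=> le_tn; rewrite [RHS](bigID (fun i => t i <= n./2)%N) /= mulnDr !big_distrr /=.
have n_half := odd_double_half n; have odd_le1 := leq_b1 (odd n).
rewrite -muln2 in n_half.
congr (_ + _); first by apply: eq_bigr => i le_half; have := le_tn i; lia.
apply: eq_big => [i | i gt_half]; first by rewrite ltnNge.
by have := le_tn i; lia.
Qed.

Lemma two_distinct (T : eqType) (s : seq T) : uniq s -> (2 <= size s)%N ->
  exists x y, [/\ x \in s, y \in s & y != x].
Proof.
case: s => [|x [|y s]] //= /andP[]; rewrite inE negb_or => /andP[xy _] _ _.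
by exists x, y; split; rewrite ?inE ?eqxx ?orbT // eq_sym.
Qed.

Theorem theorem3p11 (F : finFieldType) (n r : nat) (t : 'I_r -> nat)
  (C : seq (flag F n r)) :
  (1 < n)%N -> is_type n t -> flag_code t C ->
  (optimum_distance t C <->
   disjoint_code C /\
   (forall i : 'I_r, dS_set (proj_code C i) = minn (2 * t i) (2 * (n - t i)))).
Proof.
move=> _ [t_range _] [uniqC [sizeC flagsC]].
pose m i := minn (2 * t i) (2 * (n - t i)).
have m_gt0 i : (0 < m i)%N by have := t_range i; rewrite /m; lia.
have le_m i : {in C &, forall f g : flag F n r, dS (f i) (g i) <= m i}%N.
  by move=> f g /flagsC[dim_f _] /flagsC[dim_g _]; apply: dS_le.
have [a [b [aC bC ba]]] := two_distinct uniqC sizeC.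
have proj_opt i := @min_pairs_map _ _ C (fun f => f i) _ _ _ _ aC bC ba (m_gt0 i)
  (@dS_id F n) (le_m i).
rewrite /optimum_distance optimum_value_sum => [|i]; last by have := t_range i; lia.
rewrite /df_code (min_pairs_eq aC bC ba) => [|f g fC gC _]; last first.
  by apply: leq_sum => i _; apply: le_m.
transitivity (forall i, {in C &, forall f g : flag F n r, g != f -> dS (f i) (g i) = m i}).
  split=> [opt i f g fC gC gf | opt f g fC gC gf].
    by move/eqP: (opt f g fC gC gf) => /eq_sum_leqP; apply => j; apply: le_m.
  by apply/eqP/eq_sum_leqP => [i | i]; [apply: le_m | apply: opt].
split=> [opt | [disj min_proj] i].
  split=> i; have [inj_i min_i] := (proj_opt i).1 (opt i); last exact: min_i.
  exact: (size_undup_map _ uniqC).2 inj_i.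
by apply/(proj_opt i); split; [apply/(size_undup_map _ uniqC)/disj | apply: min_proj].
Qed.
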